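(* Let H1 $=i(x,i(y,x))$, H2 $=i(i(x,i(y,z)),i(i(x,y),i(x,z)))$, H3 $=i(i(x,n(x)),n(x))$, H4 $=i(x,i(n(x),y))$. Suppose $A$ is provable from H1–H4 using condensed detachment as the only rule of inference. Then $A$ has a proof from H1–H4 using condensed detachment in which no doubly negated formulas occur except those that occur as subformulas of $A$.
   Context: Formulas are terms built from propositional variables using the binary connective $i$ (implication) and the unary connective $n$ (negation). Condensed detachment: from a major premiss $i(A,B)$ and a minor premiss $C$, after renaming variables so that the two premisses share no variables, if $A$ and $C$ are unifiable with most general unifier $\sigma$, infer $B\sigma$. Alphabetic variants of axioms count as axioms, and conclusions may be renamed. A doubly negated formula is one of the form $n(n(t))$. *)

From Stdlib Require Import List.
Import ListNotations.

Inductive form : Type :=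
| Var : nat -> form
| Imp : form -> form -> form
| Neg : form -> form.

Fixpoint subst (s : nat -> form) (f : form) : form :=
  match f with
  | Var x => s x
  | Imp a b => Imp (subst s a) (subst s b)
  | Neg a => Neg (subst s a)
  end.

Fixpoint occurs (x : nat) (f : form) : Prop :=
  match f with
  | Var y => x = y
  | Imp a b => occurs x a \/ occurs x b
  | Neg a => occurs x a
  end.

Definition renaming (p : nat -> nat) : Prop :=
  exists q : nat -> nat, forall x, q (p x) = x /\ p (q x) = x.

Definition rename (p : nat -> nat) (f : form) : form :=
  subst (fun x => Var (p x)) f.

Definition variant (F G : form) : Prop :=
  exists p, renaming p /\ G = rename p F.

Definition unifier (s : nat -> form) (a b : form) : Prop :=
  subst s a = subst s b.

Definition mgu (s : nat -> form) (a b : form) : Prop :=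
  unifier s a b /\
  forall t, unifier t a b -> exists r, forall x, t x = subst r (s x).

Definition cd (P Q R : form) : Prop :=
  exists P' Q' A B s,
    variant P P' /\ variant Q Q' /\
    (forall x, occurs x P' -> ~ occurs x Q') /\
    P' = Imp A B /\ mgu s A Q' /\ variant (subst s B) R.

Definition x_ := Var 0.
Definition y_ := Var 1.
Definition z_ := Var 2.

Definition H1 : form := Imp x_ (Imp y_ x_).
Definition H2 : form :=
  Imp (Imp x_ (Imp y_ z_)) (Imp (Imp x_ y_) (Imp x_ z_)).
Definition H3 : form := Imp (Imp x_ (Neg x_)) (Neg x_).
Definition H4 : form := Imp x_ (Imp (Neg x_) y_).

Definition is_axiom (F : form) : Prop :=
  exists H, In H [H1; H2; H3; H4] /\ variant H F.

Inductive derivation : list form -> Prop :=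
| deriv_nil : derivation []
| deriv_ax : forall l F, derivation l -> is_axiom F -> derivation (l ++ [F])
| deriv_cd : forall l P Q F, derivation l -> In P l -> In Q l -> cd P Q F ->
    derivation (l ++ [F]).

Definition provable (A : form) : Prop := exists l, derivation (l ++ [A]).

Inductive subform : form -> form -> Prop :=
| sub_refl : forall f, subform f f
| sub_impl : forall f a b, subform f a -> subform f (Imp a b)
| sub_impr : forall f a b, subform f b -> subform f (Imp a b)
| sub_neg : forall f a, subform f a -> subform f (Neg a).

(* Call a formula admissible if its variables are below a fixed bound and each
   of its doubly negated subformulas is a subformula of A.  Consider the Hilbert
   calculus on admissible formulas whose axioms are the admissible instances of
   condensed-detachment theorems free of double negations, and whose rule is
   modus ponens.  It is complete for a Kripke semantics whose worlds are its
   theories, the explosive theories forcing every formula, and forcing agrees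
   with membership on subformulas of A.  Every condensed-detachment theorem is
   valid there, so A is derivable in the calculus.

   Condensed detachment can neither instantiate nor apply modus ponens
   directly, so the calculus is simulated under the antecedent
   env k = (k -> k) -> ... -> (1 -> 1) -> (0 -> 0), which contains every
   variable in play: a most general unifier can then neither rename nor
   identify these variables, and each detachment yields exactly the intended
   formula.  The few schematic theorems without double negations that this
   needs are obtained by running condensed detachment on explicit proofs in
   Meredith's D-notation, the unifiers being computed and then checked. *)

From Stdlib Require Import List Arith Bool Lia.
Import ListNotations.

Infix "~>" := Imp (at level 55, right associativity).
Notation "# n" := (Var n) (at level 1, format "# n").
Notation "¬ a" := (Neg a) (at level 35, right associativity).

Lemma subst_subst s t f : subst s (subst t f) = subst (fun x => subst s (t x)) f.
Proof. induction f; simpl; congruence. Qed.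

Lemma subst_var f : subst Var f = f.
Proof. induction f; simpl; congruence. Qed.

Lemma subst_ext_on s t f : (forall x, occurs x f -> s x = t x) -> subst s f = subst t f.
Proof.
  induction f; simpl; intros H.
  - now apply H.
  - rewrite IHf1, IHf2 by (intros; apply H; tauto). reflexivity.
  - rewrite IHf by (intros; apply H; tauto). reflexivity.
Qed.

Lemma subst_eq_on s t f : subst s f = subst t f -> forall x, occurs x f -> s x = t x.
Proof.
  induction f; simpl; intros H x Hx.
  - now subst.
  - injection H as H1 H2. destruct Hx; auto.
  - injection H as H1. auto.
Qed.

Lemma subst_id_on s f : (forall x, occurs x f -> s x = Var x) -> subst s f = f.
Proof. intros H. rewrite <- (subst_var f) at 2. now apply subst_ext_on. Qed.

Lemma occurs_subst x s f : occurs x (subst s f) <-> exists y, occurs y f /\ occurs x (s y).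
Proof.
  induction f; simpl.
  - split; [eauto | now intros [y [-> H]]].
  - rewrite IHf1, IHf2. firstorder.
  - exact IHf.
Qed.

Lemma occurs_rename x p f : occurs x (rename p f) <-> exists y, occurs y f /\ x = p y.
Proof.
  unfold rename. rewrite occurs_subst. simpl.
  split; intros [y [H1 H2]]; exists y; auto.
Qed.

Lemma occurs_dec x f : {occurs x f} + {~ occurs x f}.
Proof.
  induction f; simpl.
  - apply Nat.eq_dec.
  - destruct IHf1, IHf2; tauto.
  - exact IHf.
Defined.

Definition upd (s : nat -> form) (a : nat) (g : form) : nat -> form :=
  fun x => if Nat.eqb x a then g else s x.
Arguments upd : simpl never.

Lemma upd_eq s a g : upd s a g a = g.
Proof. unfold upd. now rewrite Nat.eqb_refl. Qed.

Lemma upd_neq s a g x : x <> a -> upd s a g x = s x.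
Proof. unfold upd. intros H. now destruct (Nat.eqb_spec x a). Qed.

Definition bound (k : nat) (f : form) : Prop := forall x, occurs x f -> x < k.

Lemma bound_imp k a b : bound k (a ~> b) <-> bound k a /\ bound k b.
Proof. unfold bound; simpl; firstorder. Qed.

Lemma bound_neg k a : bound k (¬ a) <-> bound k a.
Proof. reflexivity. Qed.

Lemma bound_mono k k' f : bound k f -> k <= k' -> bound k' f.
Proof. intros H Hk x Hx. apply H in Hx. lia. Qed.

Fixpoint maxvar (f : form) : nat :=
  match f with
  | Var x => x
  | Imp a b => Nat.max (maxvar a) (maxvar b)
  | Neg a => maxvar a
  end.

Lemma bound_maxvar f : bound (S (maxvar f)) f.
Proof.
  induction f; intros x Hx; simpl in *.
  - lia.
  - destruct Hx as [Hx|Hx]; [apply IHf1 in Hx | apply IHf2 in Hx]; lia.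
  - apply IHf in Hx; lia.
Qed.

Lemma renaming_id : renaming (fun x => x).
Proof. now exists (fun x => x). Qed.

Lemma renaming_comp p q : renaming p -> renaming q -> renaming (fun x => p (q x)).
Proof.
  intros [p' Hp] [q' Hq]. exists (fun x => q' (p' x)). intros x. split.
  - rewrite (proj1 (Hp _)). apply Hq.
  - rewrite (proj2 (Hq _)). apply Hp.
Qed.

Lemma renaming_ext p q : (forall x, p x = q x) -> renaming p -> renaming q.
Proof.
  intros E [p' Hp]. exists p'. intros x. rewrite <- E. split; [apply Hp|].
  rewrite <- (proj2 (Hp x)) at 2. now rewrite E.
Qed.

Lemma renaming_involution p : (forall x, p (p x) = x) -> renaming p.
Proof. intros H. now exists p. Qed.

Lemma variant_rename p f : renaming p -> variant f (rename p f).
Proof. now exists p. Qed.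

Lemma variant_refl f : variant f f.
Proof. exists (fun x => x). split; [apply renaming_id | symmetry; apply subst_var]. Qed.

Lemma variant_trans f g h : variant f g -> variant g h -> variant f h.
Proof.
  intros [p [Hp ->]] [q [Hq ->]]. exists (fun x => q (p x)). split.
  - now apply renaming_comp.
  - unfold rename. now rewrite subst_subst.
Qed.

Definition swap (a b x : nat) : nat :=
  if Nat.eqb x a then b else if Nat.eqb x b then a else x.

Lemma renaming_swap a b : renaming (swap a b).
Proof.
  apply renaming_involution. intros x. unfold swap.
  repeat match goal with
         | |- context [?u =? ?v] => destruct (Nat.eqb_spec u v)
         | _ : context [?u =? ?v] |- _ => destruct (Nat.eqb_spec u v)
         end; congruence.
Qed.

Definition swaps (l : list (nat * nat)) (x : nat) : nat :=
  fold_left (fun y ab => swap (fst ab) (snd ab) y) l x.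

Lemma renaming_swaps l : renaming (swaps l).
Proof.
  induction l as [|[a b] l IH] using rev_ind.
  - apply renaming_id.
  - apply (renaming_ext (fun x => swap a b (swaps l x))).
    + intros x. unfold swaps. now rewrite fold_left_app.
    + exact (renaming_comp _ _ (renaming_swap a b) IH).
Qed.

(* Exchanges the block [0, g) with the block [k, k + g). *)
Definition block_swap (k g x : nat) : nat :=
  if x <? g then x + k else if (k <=? x) && (x <? k + g) then x - k else x.

Lemma block_swap_involutive k g x : g <= k -> block_swap k g (block_swap k g x) = x.
Proof.
  intros Hg. unfold block_swap.
  destruct (Nat.ltb_spec x g), (Nat.leb_spec k x), (Nat.ltb_spec x (k + g)); simpl;
  repeat match goal with
         | |- context [?a <? ?b] => destruct (Nat.ltb_spec a b)
         | |- context [?a <=? ?b] => destruct (Nat.leb_spec a b)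
         end; simpl; lia.
Qed.

Lemma renaming_block_swap k g : g <= k -> renaming (block_swap k g).
Proof. intros Hg. apply renaming_involution. intros x. now apply block_swap_involutive. Qed.

Lemma block_swap_apart k g f x :
  bound g f -> occurs x (rename (block_swap k g) f) -> k <= x.
Proof.
  intros Hb Hx. apply occurs_rename in Hx as [y [Hy ->]].
  specialize (Hb y Hy). unfold block_swap. destruct (Nat.ltb_spec y g); lia.
Qed.

(** * Condensed detachment by computation *)

Definition form_eq_dec (f g : form) : {f = g} + {f <> g}.
Proof. decide equality; apply Nat.eq_dec. Defined.

Definition solves (t : nat -> form) (sol : list (nat * form)) : Prop :=
  forall x g, In (x, g) sol -> t x = subst t g.

Definition unifies (t : nat -> form) (eqs : list (form * form)) : Prop :=
  forall a b, In (a, b) eqs -> subst t a = subst t b.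

Definition subst_pair (s : nat -> form) (e : form * form) : form * form :=
  (subst s (fst e), subst s (snd e)).

(* Variable elimination without occurs check: [solve] is only trusted to
   preserve the solutions of the equations; that its result unifies them is
   checked afterwards. *)
Fixpoint solve (fuel : nat) (eqs : list (form * form)) (sol : list (nat * form))
  : option (list (nat * form)) :=
  match fuel with
  | 0 => None
  | S fuel =>
      match eqs with
      | [] => Some sol
      | (Imp a b, Imp c d) :: eqs => solve fuel ((a, c) :: (b, d) :: eqs) sol
      | (Neg a, Neg c) :: eqs => solve fuel ((a, c) :: eqs) sol
      | (Var x, g) :: eqs | (g, Var x) :: eqs =>
          let e := upd Var x g in
          solve fuel (map (subst_pair e) eqs)
            ((x, g) :: map (fun p => (fst p, subst e (snd p))) sol)
      | _ => None
      end
  end.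

Lemma subst_elim t x g f :
  t x = subst t g -> subst t (subst (upd Var x g) f) = subst t f.
Proof.
  intros H. rewrite subst_subst. apply subst_ext_on. intros y _. unfold upd.
  destruct (Nat.eqb_spec y x) as [->|]; auto.
Qed.

Lemma unifies_cons t a b eqs :
  unifies t ((a, b) :: eqs) <-> subst t a = subst t b /\ unifies t eqs.
Proof.
  split.
  - intros H. split; [apply H; now left | intros u v Huv; apply H; now right].
  - intros [Hab H] u v [E|E]; [now injection E as <- <- | now apply H].
Qed.

Lemma solve_sound fuel eqs sol res t :
  solve fuel eqs sol = Some res -> unifies t eqs -> solves t sol -> solves t res.
Proof.
  revert eqs sol. induction fuel as [|fuel IH]; intros eqs sol Hs Hu Hsol; [discriminate|].
  assert (Elim : forall x g eqs',
    t x = subst t g -> unifies t eqs' ->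
    solve fuel (map (subst_pair (upd Var x g)) eqs')
      ((x, g) :: map (fun p => (fst p, subst (upd Var x g) (snd p))) sol) = Some res ->
    solves t res).
  { intros x g eqs' Hx Hu' Hs'. apply (IH _ _ Hs').
    - intros a b Hab. apply in_map_iff in Hab as [[a' b'] [Hab Hin]].
      injection Hab as <- <-. rewrite !subst_elim by exact Hx. exact (Hu' a' b' Hin).
    - intros y h [Hy|Hy].
      + now injection Hy as <- <-.
      + apply in_map_iff in Hy as [[y' h'] [Hy Hin]]. injection Hy as <- <-.
        rewrite subst_elim by exact Hx. exact (Hsol y' h' Hin). }
  destruct eqs as [|[a b] eqs]; simpl in Hs; [now injection Hs as <-|].
  apply unifies_cons in Hu as [Hab Hu'].
  destruct a as [x|a1 a2|a1].
  { exact (Elim _ _ _ Hab Hu' Hs). }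
  all: destruct b as [y|b1 b2|b1]; try discriminate.
  - exact (Elim _ _ _ (eq_sym Hab) Hu' Hs).
  - apply (IH _ _ Hs); [|exact Hsol]. injection Hab as H1 H2.
    now apply unifies_cons; split; [|apply unifies_cons].
  - exact (Elim _ _ _ (eq_sym Hab) Hu' Hs).
  - apply (IH _ _ Hs); [|exact Hsol]. injection Hab as H1.
    now apply unifies_cons.
Qed.

Definition subst_of (sol : list (nat * form)) (x : nat) : form :=
  match find (fun p => Nat.eqb (fst p) x) sol with
  | Some p => snd p
  | None => Var x
  end.

Lemma solves_subst_of t sol x : solves t sol -> t x = subst t (subst_of sol x).
Proof.
  intros H. unfold subst_of.
  destruct (find _ sol) as [[y g]|] eqn:E; [|reflexivity].
  apply find_some in E as [Hin Hy]. simpl in Hy. apply Nat.eqb_eq in Hy as ->.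
  exact (H x g Hin).
Qed.

Lemma solve_mgu fuel a b sol :
  solve fuel [(a, b)] [] = Some sol -> unifier (subst_of sol) a b ->
  mgu (subst_of sol) a b.
Proof.
  intros Hs Hu. split; [exact Hu|]. intros t Ht. exists t. intros x.
  apply solves_subst_of, (solve_sound _ _ _ _ _ Hs).
  - apply unifies_cons. split; [exact Ht | intros ? ? []].
  - intros ? ? [].
Qed.

Fixpoint vars (f : form) : list nat :=
  match f with
  | Var x => [x]
  | Imp a b => vars a ++ vars b
  | Neg a => vars a
  end.

(* Renames the i-th distinct variable of the list to [i]: after the swaps of
   [acc], the variable [v] sits at [swaps acc v]. *)
Fixpoint number_vars (vs : list nat) (i : nat) (acc : list (nat * nat)) :=
  match vs with
  | [] => acc
  | v :: vs => number_vars vs (S i) (acc ++ [(swaps acc v, i)])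
  end.

Definition normalize (f : form) : form :=
  rename (swaps (number_vars (rev (nodup Nat.eq_dec (rev (vars f)))) 0 [])) f.

Definition cd_fuel := 1000.

Definition cd_compute (P Q : form) : option form :=
  match P with
  | Imp a b =>
      let k := S (Nat.max (maxvar P) (maxvar Q)) in
      let q := rename (block_swap k k) Q in
      match solve cd_fuel [(a, q)] [] with
      | Some sol =>
          if form_eq_dec (subst (subst_of sol) a) (subst (subst_of sol) q)
          then Some (normalize (subst (subst_of sol) b)) else None
      | None => None
      end
  | _ => None
  end.

Lemma cd_compute_sound P Q R : cd_compute P Q = Some R -> cd P Q R.
Proof.
  destruct P as [|a b|]; try discriminate.
  cbv beta iota zeta delta [cd_compute].
  set (k := S (Nat.max (maxvar (a ~> b)) (maxvar Q))).
  set (q := rename (block_swap k k) Q).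
  destruct (solve cd_fuel [(a, q)] []) as [sol|] eqn:Hs; [|discriminate].
  destruct (form_eq_dec _ _) as [Hu|]; [|discriminate]. intros [= <-].
  exists (a ~> b), q, a, b, (subst_of sol).
  split; [apply variant_refl|]. split; [apply variant_rename, renaming_block_swap; lia|].
  split; [|split; [reflexivity | split; [exact (solve_mgu _ _ _ _ Hs Hu)|]]].
  - intros x Hx Hq.
    assert (x < k) by (apply bound_maxvar in Hx; lia).
    enough (k <= x) by lia.
    apply (block_swap_apart k k Q); [|exact Hq].
    intros y Hy. apply bound_maxvar in Hy. lia.
  - apply variant_rename, renaming_swaps.
Qed.

Lemma derivation_app l1 l2 : derivation l1 -> derivation l2 -> derivation (l1 ++ l2).
Proof.
  intros H1 H2. induction H2.
  - now rewrite app_nil_r.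
  - rewrite app_assoc. now constructor.
  - rewrite app_assoc. eapply deriv_cd; eauto; apply in_or_app; auto.
Qed.

Definition provable_within (ok : form -> Prop) (F : form) : Prop :=
  exists l, derivation (l ++ [F]) /\ forall G, In G (l ++ [F]) -> ok G.

Section ProvableWithin.
Variable ok : form -> Prop.

Lemma provable_within_ok F : provable_within ok F -> ok F.
Proof. intros [l [_ H]]. apply H, in_or_app. simpl. tauto. Qed.

Lemma provable_within_axiom F : is_axiom F -> ok F -> provable_within ok F.
Proof.
  intros H1 H2. exists []. split.
  - exact (deriv_ax [] F deriv_nil H1).
  - now intros G [<-|[]].
Qed.

Lemma provable_within_cd P Q R :
  provable_within ok P -> provable_within ok Q -> cd P Q R -> ok R ->
  provable_within ok R.
Proof.
  intros [l1 [D1 O1]] [l2 [D2 O2]] Hc HR.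
  exists ((l1 ++ [P]) ++ (l2 ++ [Q])). split.
  - apply deriv_cd with P Q; [now apply derivation_app | | | exact Hc];
      rewrite !in_app_iff; simpl; tauto.
  - intros G HG. rewrite !in_app_iff in HG. simpl in HG.
    destruct HG as [[[HG|[<-|[]]]|[HG|[<-|[]]]]|[<-|[]]];
      [apply O1 | apply O1 | apply O2 | apply O2 | exact HR];
      apply in_or_app; simpl; tauto.
Qed.

End ProvableWithin.

(** * Theorems without double negations *)

Fixpoint nnfree (f : form) : bool :=
  match f with
  | Var _ => true
  | Imp a b => nnfree a && nnfree b
  | Neg (Neg _) => false
  | Neg a => nnfree a
  end.

Lemma nnfree_no_double_neg t f : nnfree f = true -> ~ subform (¬ ¬ t) f.
Proof.
  intros H1 H2. remember (¬ ¬ t) as g. induction H2; subst.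
  - discriminate.
  - simpl in H1. apply andb_true_iff in H1. tauto.
  - simpl in H1. apply andb_true_iff in H1. tauto.
  - destruct a; simpl in H1; try discriminate; now apply IHsubform.
Qed.

Definition nn_theorem : form -> Prop := provable_within (fun f => nnfree f = true).

Lemma nn_theorem_axiom H : In H [H1; H2; H3; H4] -> nnfree H = true -> nn_theorem H.
Proof.
  intros Hin Hnn. apply provable_within_axiom; [|exact Hnn].
  exists H. split; [exact Hin | apply variant_refl].
Qed.

Lemma ax_K : nn_theorem (#0 ~> #1 ~> #0).
Proof. apply (nn_theorem_axiom H1); [simpl; tauto | reflexivity]. Qed.

Lemma ax_S : nn_theorem ((#0 ~> #1 ~> #2) ~> (#0 ~> #1) ~> #0 ~> #2).
Proof. apply (nn_theorem_axiom H2); [simpl; tauto | reflexivity]. Qed.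

Lemma ax_H3 : nn_theorem ((#0 ~> ¬ #0) ~> ¬ #0).
Proof. apply (nn_theorem_axiom H3); [simpl; tauto | reflexivity]. Qed.

Lemma ax_H4 : nn_theorem (#0 ~> ¬ #0 ~> #1).
Proof. apply (nn_theorem_axiom H4); [simpl; tauto | reflexivity]. Qed.

(* Meredith's D-notation: [D d1 d2] is condensed detachment with major premiss
   [d1] and minor premiss [d2]. *)
Inductive dterm : Type :=
| dthm {F : form} (h : nn_theorem F)
| D (d1 d2 : dterm).
Coercion dthm : nn_theorem >-> dterm.

Fixpoint dconcl (d : dterm) : option form :=
  match d with
  | @dthm F _ => Some F
  | D d1 d2 =>
      match dconcl d1, dconcl d2 with
      | Some P, Some Q => cd_compute P Q
      | _, _ => None
      end
  end.

Fixpoint dnnfree (d : dterm) : bool :=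
  match d with
  | dthm _ => true
  | D d1 d2 =>
      dnnfree d1 && dnnfree d2 &&
      match dconcl (D d1 d2) with Some R => nnfree R | None => false end
  end.

Lemma dterm_sound d F : dconcl d = Some F -> dnnfree d = true -> nn_theorem F.
Proof.
  revert F. induction d as [F h|d1 IH1 d2 IH2]; simpl; intros R Hc Hnn.
  - now injection Hc as <-.
  - destruct (dconcl d1) as [P|], (dconcl d2) as [Q|]; try discriminate.
    rewrite Hc in Hnn. apply andb_true_iff in Hnn as [Hnn HR].
    apply andb_true_iff in Hnn as [Hnn1 Hnn2].
    apply (provable_within_cd _ P Q); [apply IH1 | apply IH2 | apply cd_compute_sound |]; auto.
Qed.

Ltac derive d := apply (dterm_sound d); vm_compute; reflexivity.

(* From [a ~> b], [prefix] derives [(c ~> a) ~> c ~> b]. *)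
Definition prefix (d : dterm) : dterm := D ax_S (D ax_K d).

Lemma nn_id : nn_theorem (#0 ~> #0).
Proof. derive (D (D ax_S ax_K) ax_K). Qed.

Lemma nn_S_under : nn_theorem ((#0 ~> #1 ~> #2 ~> #3) ~> #0 ~> (#1 ~> #2) ~> #1 ~> #3).
Proof. derive (D ax_S (D ax_K ax_S)). Qed.

Lemma nn_K_under : nn_theorem (#0 ~> #1 ~> #2 ~> #1).
Proof. derive (D ax_K ax_K). Qed.

Lemma nn_weaken : nn_theorem ((#0 ~> #1) ~> #0 ~> #2 ~> #1).
Proof. derive (D ax_S nn_K_under). Qed.

Lemma nn_B : nn_theorem ((#0 ~> #1) ~> (#2 ~> #0) ~> #2 ~> #1).
Proof. derive (D nn_S_under ax_K). Qed.

Lemma nn_B_self : nn_theorem (((#0 ~> #1) ~> #2 ~> #0) ~> (#0 ~> #1) ~> #2 ~> #1).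
Proof. derive (D ax_S nn_B). Qed.

Lemma nn_K_id : nn_theorem (#0 ~> #1 ~> #1).
Proof. derive (D ax_K nn_id). Qed.

Lemma nn_id_id : nn_theorem ((#0 ~> #0) ~> #0 ~> #0).
Proof. derive (D nn_B_self nn_id). Qed.

Lemma nn_drop_id : nn_theorem (#0 ~> (#1 ~> #1) ~> #0).
Proof. derive (D (D ax_S (D nn_S_under (D nn_weaken ax_K))) (D ax_K nn_id_id)). Qed.

Lemma nn_env_mp : nn_theorem ((#0 ~> #1) ~> ((#2 ~> #2) ~> #0) ~> #1).
Proof. derive (D nn_B_self (D ax_K (D (D ax_S nn_id) nn_K_id))). Qed.

Lemma nn_env_id : nn_theorem ((#0 ~> #1) ~> ((#2 ~> #2) ~> #0) ~> #2 ~> #2).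
Proof.
  derive (D (prefix (D ax_S (D nn_weaken (D (D ax_S (D ax_S ax_K)) nn_K_id)))) nn_B).
Qed.

Lemma nn_imp_cong_under :
  nn_theorem ((#0 ~> #1 ~> #2) ~> #0 ~> (#3 ~> #4) ~> (#2 ~> #3) ~> #1 ~> #4).
Proof.
  derive (prefix (D (prefix (D ax_S (D nn_S_under (D nn_weaken nn_B))))
                    (D nn_weaken (D (prefix nn_B_self) ax_K)))).
Qed.

Lemma nn_contra_under : nn_theorem ((#0 ~> #1 ~> #2) ~> #0 ~> ¬ #2 ~> ¬ #1).
Proof.
  derive (prefix (D (prefix (prefix ax_H3))
                    (D (D ax_S (D nn_S_under (D nn_weaken (D nn_S_under (prefix ax_H4)))))
                       nn_K_under))).
Qed.

Lemma cd_variant_major P P' Q R : variant P P' -> cd P' Q R -> cd P Q R.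
Proof.
  intros HP (P''&Q'&a&b&s&V1&V2&Hd&E&Hm&V3).
  exists P'', Q', a, b, s. split; [now apply (variant_trans _ P') | tauto].
Qed.

Lemma cd_variant_minor P Q Q' R : variant Q Q' -> cd P Q' R -> cd P Q R.
Proof.
  intros HQ (P'&Q''&a&b&s&V1&V2&Hd&E&Hm&V3).
  exists P', Q'', a, b, s. split; [exact V1 | split; [now apply (variant_trans _ Q') | tauto]].
Qed.

Lemma cd_variant_conclusion P Q R R' : cd P Q R -> variant R R' -> cd P Q R'.
Proof.
  intros (P'&Q'&a&b&s&V1&V2&Hd&E&Hm&V3) HR.
  exists P', Q', a, b, s. do 5 (split; [assumption|]). now apply (variant_trans _ R).
Qed.

Definition restrict (s : nat -> form) (f : form) : nat -> form :=
  fun x => if occurs_dec x f then s x else Var x.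

Lemma subst_restrict s f : subst (restrict s f) f = subst s f.
Proof. apply subst_ext_on. intros x Hx. unfold restrict. now destruct occurs_dec. Qed.

Lemma mgu_of_match s a Q :
  (forall x, occurs x Q -> ~ occurs x a) -> subst s a = Q -> mgu (restrict s a) a Q.
Proof.
  intros Hd HQ. split.
  - unfold unifier. rewrite subst_restrict, HQ. symmetry. apply subst_id_on.
    intros x Hx. unfold restrict. destruct occurs_dec; [exfalso; eapply Hd|]; eauto.
  - intros t Ht. exists t. intros x. unfold restrict. destruct occurs_dec as [Hx|]; [|reflexivity].
    unfold unifier in Ht. rewrite <- HQ, subst_subst in Ht.
    exact (subst_eq_on _ _ _ Ht x Hx).
Qed.

Lemma cd_minor_instance a b Q s :
  (forall x, occurs x (a ~> b) -> ~ occurs x Q) ->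
  subst s a = Q ->
  (forall x, occurs x b -> ~ occurs x a -> s x = Var x) ->
  cd (a ~> b) Q (subst s b).
Proof.
  intros Hd HQ Hb. exists (a ~> b), Q, a, b, (restrict s a).
  split; [apply variant_refl|]. split; [apply variant_refl|].
  split; [exact Hd|]. split; [reflexivity|].
  split; [apply mgu_of_match; [intros x Hx Ha; apply (Hd x); simpl; auto | exact HQ]|].
  replace (subst (restrict s a) b) with (subst s b); [apply variant_refl|].
  apply subst_ext_on. intros x Hx. unfold restrict.
  destruct occurs_dec; [reflexivity | now apply Hb].
Qed.

Lemma cd_antecedent_instance a b Q s :
  (forall x, occurs x (a ~> b) -> ~ occurs x Q) ->
  subst s Q = a ->
  cd (a ~> b) Q b.
Proof.
  intros Hd Ha. set (s' := restrict s Q).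
  assert (Fix : forall f, (forall x, occurs x f -> ~ occurs x Q) -> subst s' f = f).
  { intros f Hf. apply subst_id_on. intros x Hx. unfold s', restrict.
    destruct occurs_dec; [exfalso; eapply Hf|]; eauto. }
  exists (a ~> b), Q, a, b, s'. repeat split.
  - apply variant_refl.
  - apply variant_refl.
  - exact Hd.
  - unfold unifier. rewrite Fix by (intros; apply Hd; simpl; auto).
    unfold s'. now rewrite subst_restrict.
  - intros t Ht. exists t. intros x. unfold s', restrict.
    destruct occurs_dec as [Hx|]; [|reflexivity].
    unfold unifier in Ht. rewrite <- Ha, subst_subst in Ht.
    symmetry. exact (subst_eq_on _ _ _ Ht x Hx).
  - rewrite Fix by (intros; apply Hd; simpl; auto). apply variant_refl.
Qed.

Lemma cd_minor_instance_shared a b Q q s :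
  renaming q ->
  (forall x, occurs x (a ~> b) -> ~ occurs x (rename q Q)) ->
  subst s a = Q ->
  (forall x, occurs x Q -> occurs x a /\ s x = Var x) ->
  (forall x, ~ occurs x a -> s x = Var x) ->
  cd (a ~> b) Q (subst s b).
Proof.
  intros [qi Hq] Hd HQ HQa Hs. set (Q' := rename q Q) in *.
  set (s' := fun x => if occurs_dec x Q' then Var (qi x) else s x).
  assert (Fix : forall f, (forall x, occurs x f -> ~ occurs x Q') -> subst s' f = subst s f).
  { intros f Hf. apply subst_ext_on. intros x Hx. unfold s'.
    destruct occurs_dec; [exfalso; eapply Hf|]; eauto. }
  exists (a ~> b), Q', a, b, s'.
  split; [apply variant_refl|]. split; [exists q; split; [now exists qi | reflexivity]|].
  split; [exact Hd|]. split; [reflexivity|]. split; [split|].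
  - unfold unifier. rewrite Fix, HQ by (intros; apply Hd; simpl; auto).
    unfold Q', rename. rewrite subst_subst. symmetry. apply subst_id_on.
    intros y Hy. unfold s'; simpl. destruct occurs_dec as [|Hn].
    + now rewrite (proj1 (Hq y)).
    + exfalso. apply Hn, occurs_rename. eauto.
  - intros t Ht. exists t. unfold unifier in Ht.
    assert (Ha : forall x, occurs x a -> t x = subst t (rename q (s x))).
    { intros x Hx. unfold Q', rename in Ht. rewrite <- HQ, !subst_subst in Ht.
      rewrite (subst_eq_on _ _ _ Ht x Hx). unfold rename. now rewrite subst_subst. }
    assert (HQt : forall y, occurs y Q -> t y = t (q y)).
    { intros y Hy. destruct (HQa y Hy) as [Hya Hsy]. rewrite (Ha y Hya), Hsy. reflexivity. }
    intros x. unfold s'; cbv beta. destruct occurs_dec as [HxQ|HxQ].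
    + apply occurs_rename in HxQ as [y [Hy ->]]. simpl. rewrite (proj1 (Hq y)).
      symmetry. auto.
    + destruct (occurs_dec x a) as [Hxa|Hxa]; [|now rewrite Hs].
      rewrite (Ha x Hxa). unfold rename. rewrite subst_subst.
      apply subst_ext_on. intros y Hy. simpl. symmetry. apply HQt.
      rewrite <- HQ. apply occurs_subst. eauto.
  - rewrite Fix by (intros; apply Hd; simpl; auto). apply variant_refl.
Qed.

Lemma provable_within_mono (ok1 ok2 : form -> Prop) F :
  (forall f, ok1 f -> ok2 f) -> provable_within ok1 F -> provable_within ok2 F.
Proof. intros H [l [D O]]. exists l. auto. Qed.

Lemma subst_upd_fresh u g f : ~ occurs u f -> subst (upd Var u g) f = f.
Proof.
  intros Hu. apply subst_id_on. intros x Hx. apply upd_neq. intros ->. contradiction.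
Qed.

Lemma variant_replace_var u v f g :
  ~ occurs v f -> subst (upd Var u (Var v)) f = g -> variant f g.
Proof.
  intros Hv <-. exists (swap u v). split; [apply renaming_swap|].
  apply subst_ext_on. intros x Hx. unfold swap, upd.
  destruct (Nat.eqb_spec x u); [reflexivity|].
  destruct (Nat.eqb_spec x v); [subst; contradiction | reflexivity].
Qed.

Definition inst (l : list form) (k y : nat) : form := nth y l (Var (k + y)).
Arguments inst l k y /.

Lemma inst_fresh l k y : length l <= y -> inst l k y = Var (k + y).
Proof. apply nth_overflow. Qed.

Section DetachNNTheorem.
Variable ok : form -> Prop.
Hypothesis ok_nnfree : forall f, nnfree f = true -> ok f.

Lemma detach_nn_theorem a b g k Q s R :
  nn_theorem (a ~> b) -> bound g (a ~> b) -> g <= k ->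
  provable_within ok Q -> bound k Q ->
  subst s a = Q ->
  (forall y, occurs y b -> ~ occurs y a -> s y = Var (k + y)) ->
  variant (subst s b) R -> ok R -> provable_within ok R.
Proof.
  intros HG Hb Hg HQ HbQ Ha Hfresh HR HokR.
  set (p := block_swap k g).
  assert (Hp : forall x, p (p x) = x) by (intros; now apply block_swap_involutive).
  assert (Eb : subst s b = subst (fun x => s (p x)) (rename p b)).
  { unfold rename. rewrite subst_subst. simpl. apply subst_ext_on. intros. now rewrite Hp. }
  apply (provable_within_cd ok (a ~> b) Q R);
    [exact (provable_within_mono _ _ _ ok_nnfree HG) | exact HQ | | exact HokR].
  apply (cd_variant_major _ (rename p a ~> rename p b));
    [apply (variant_rename p (a ~> b)), renaming_block_swap; exact Hg|].
  eapply cd_variant_conclusion; [|exact HR]. rewrite Eb.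
  apply cd_minor_instance.
  - intros x Hx HxQ. apply HbQ in HxQ.
    enough (k <= x) by lia. now apply (block_swap_apart k g (a ~> b)).
  - rewrite <- Ha. unfold rename. rewrite subst_subst. simpl.
    apply subst_ext_on. intros. now rewrite Hp.
  - intros x Hx Hna. apply occurs_rename in Hx as [y [Hy ->]].
    rewrite Hp, Hfresh; [| exact Hy | intros Hya; apply Hna, occurs_rename; eauto].
    assert (y < g) by (apply Hb; simpl; auto).
    unfold p, block_swap. destruct (Nat.ltb_spec y g); [f_equal; lia | lia].
Qed.

End DetachNNTheorem.

(** * Derivations within the double negations of a formula *)

Definition nn_within (A f : form) : Prop :=
  forall t, subform (¬ ¬ t) f -> subform (¬ ¬ t) A.

Fixpoint env (k : nat) : form :=
  match k with
  | 0 => #0 ~> #0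
  | S j => (#(S j) ~> #(S j)) ~> env j
  end.

Lemma occurs_env k x : occurs x (env k) <-> x <= k.
Proof. induction k; simpl; [lia|]. rewrite IHk. lia. Qed.

Lemma bound_env k : bound (S k) (env k).
Proof. intros x Hx. apply occurs_env in Hx. lia. Qed.

Ltac bound_tac :=
  repeat match goal with
         | H : bound _ (_ ~> _) |- _ => apply bound_imp in H as [? ?]
         | |- bound _ (_ ~> _) => apply bound_imp; split
         | |- bound _ (¬ _) => apply bound_neg
         | |- bound _ (Var _) => let x := fresh in let Hx := fresh in
                                intros x Hx; simpl in Hx; lia
         | |- bound _ (env _) => apply (bound_mono _ _ _ (bound_env _)); lia
         | H : bound ?k ?f |- bound _ ?f => apply (bound_mono k); [exact H | lia]
         end.

Lemma nnfree_env k : nnfree (env k) = true.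
Proof. induction k; simpl; auto. Qed.

Lemma nn_theorem_K G n : nn_theorem G -> bound n G -> nn_theorem (Var n ~> G).
Proof.
  intros HG Hb. assert (Hnn : nnfree G = true) by exact (provable_within_ok _ _ HG).
  apply (detach_nn_theorem _ (fun f H => H) (#0) (#1 ~> #0) 2 (n + 2) G (inst [G] (n + 2)));
    auto using ax_K; try lia; try bound_tac.
  - intros y Hy Hn. simpl in Hy, Hn. destruct Hy as [->|]; [reflexivity | contradiction].
  - apply (variant_replace_var (n + 2 + 1) n); simpl.
    + intros [Hx|Hx]; [lia | apply Hb in Hx; lia].
    + rewrite upd_eq, subst_upd_fresh; [reflexivity|]. intros Hx. apply Hb in Hx. lia.
Qed.

Section Restricted.
Variable A : form.
Local Notation nnA := (nn_within A).
Local Notation thm := (provable_within (nn_within A)).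

Lemma nn_within_nnfree f : nnfree f = true -> nnA f.
Proof. intros H t Ht. exfalso. exact (nnfree_no_double_neg t f H Ht). Qed.

Lemma nn_within_var x : nnA (Var x).
Proof. apply nn_within_nnfree. reflexivity. Qed.

Lemma nn_within_imp a b : nnA (a ~> b) <-> nnA a /\ nnA b.
Proof.
  split.
  - intros H. split; intros t Ht; apply H; [apply sub_impl | apply sub_impr]; exact Ht.
  - intros [Ha Hb] t Ht. inversion Ht; subst; auto.
Qed.

Lemma nn_within_neg a : nnA (¬ a) -> nnA a.
Proof. intros H t Ht. apply H, sub_neg, Ht. Qed.

Lemma thm_nn_within F : thm F -> nnA F.
Proof. apply provable_within_ok. Qed.

Lemma thm_nn_theorem F : nn_theorem F -> thm F.
Proof. apply provable_within_mono, nn_within_nnfree. Qed.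

Ltac nn_within_tac :=
  repeat match goal with
         | H : nnA (_ ~> _) |- _ => apply nn_within_imp in H as [? ?]
         | |- nnA (_ ~> _) => apply nn_within_imp; split
         | |- nnA (Var _) => apply nn_within_var
         | |- nnA (env _) => apply nn_within_nnfree, nnfree_env
         | |- nnA _ => assumption
         end.

Lemma thm_detach_pinned a b Q s k :
  thm (a ~> b) -> thm Q -> bound k (a ~> b) -> bound k Q ->
  subst s a = Q ->
  (forall x, occurs x Q -> occurs x a /\ s x = Var x) ->
  (forall x, ~ occurs x a -> s x = Var x) ->
  nnA (subst s b) -> thm (subst s b).
Proof.
  intros HP HQ HbP HbQ Ha HQa Hs Hnn.
  apply (provable_within_cd _ (a ~> b) Q); [exact HP | exact HQ | | exact Hnn].
  apply (cd_minor_instance_shared _ _ _ (block_swap k k)); auto using renaming_block_swap.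
  intros x Hx HxQ. apply HbP in Hx. apply (block_swap_apart k k Q) in HxQ; [lia | exact HbQ].
Qed.

Lemma thm_mp a b k : thm (a ~> b) -> thm a -> bound k (a ~> b) -> thm b.
Proof.
  intros Hab Ha Hb. rewrite <- (subst_var b).
  apply (thm_detach_pinned a b a Var k); auto.
  - now apply bound_imp in Hb.
  - apply subst_var.
  - rewrite subst_var. apply thm_nn_within in Hab. now apply nn_within_imp in Hab.
Qed.

Lemma thm_S E Y Z k : thm (E ~> Y ~> Z) -> bound k (E ~> Y ~> Z) ->
  thm ((E ~> Y) ~> E ~> Z).
Proof.
  intros H Hb. assert (Hnn := thm_nn_within _ H).
  apply (detach_nn_theorem _ nn_within_nnfree _ _ 3 (k + 3) (E ~> Y ~> Z)
           (inst [E; Y; Z] (k + 3)) _ ax_S); auto; try lia; try bound_tac.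
  - intros y Hy Hn. simpl in Hy, Hn. tauto.
  - apply variant_refl.
  - nn_within_tac.
Qed.

Lemma thm_mp_under E a b k : thm (E ~> a ~> b) -> thm (E ~> a) ->
  bound k (E ~> a ~> b) -> thm (E ~> b).
Proof.
  intros Hab Ha Hb. apply (thm_mp (E ~> a) _ k); [now apply (thm_S _ _ _ k) | exact Ha |].
  bound_tac.
Qed.

Lemma subst_upd2_low k u v g h f :
  bound k f -> k <= u -> k <= v -> subst (upd (upd Var u g) v h) f = f.
Proof.
  intros Hb Hu Hv. apply subst_id_on. intros x Hx. apply Hb in Hx.
  rewrite !upd_neq by lia. reflexivity.
Qed.

Lemma thm_env_imp_id E a b k :
  bound k E -> bound k a -> bound k b -> (forall x, x < k -> occurs x E) ->
  thm (E ~> a ~> a) -> thm (E ~> b ~> b) -> thm (E ~> (a ~> b) ~> a ~> b).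
Proof.
  intros HbE Hba Hbb HE Ha Hb.
  assert (Hnna := thm_nn_within _ Ha). assert (Hnnb := thm_nn_within _ Hb).
  assert (Hcong : thm (E ~> (#(k + 5 + 3) ~> #(k + 5 + 4)) ~>
                            (a ~> #(k + 5 + 3)) ~> a ~> #(k + 5 + 4))).
  { apply (detach_nn_theorem _ nn_within_nnfree _ _ 5 (k + 5) (E ~> a ~> a)
             (inst [E; a; a] (k + 5)) _ nn_imp_cong_under); auto; try lia; try bound_tac.
    - intros y Hy Hn. apply inst_fresh. simpl in Hn |- *. lia.
    - apply variant_refl.
    - nn_within_tac. }
  apply (thm_S _ _ _ (k + 10)) in Hcong; [|bound_tac].
  (* The fresh variables of [Hcong] are instantiated by [b] through the minor
     premiss [E ~> b ~> b], whose variables all occur in [E]. *)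
  set (s := upd (upd Var (k + 5 + 3) b) (k + 5 + 4) b).
  assert (Hs : forall f, bound k f -> subst s f = f)
    by (intros f Hf; apply (subst_upd2_low k); auto; lia).
  assert (Hs3 : s (k + 5 + 3) = b) by (unfold s; rewrite upd_neq, upd_eq by lia; reflexivity).
  assert (Hs4 : s (k + 5 + 4) = b) by (unfold s; now rewrite upd_eq).
  replace (E ~> (a ~> b) ~> a ~> b) with (subst s (E ~> (a ~> #(k + 5 + 3)) ~> a ~> #(k + 5 + 4)))
    by (simpl; now rewrite !Hs, Hs3, Hs4).
  apply (thm_detach_pinned (E ~> #(k + 5 + 3) ~> #(k + 5 + 4)) _ (E ~> b ~> b) s (k + 10));
    auto; try bound_tac.
  - simpl. now rewrite Hs, Hs3, Hs4.
  - intros x Hx. assert (HbQ : bound k (E ~> b ~> b)) by bound_tac. apply HbQ in Hx as Hxk.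
    split; [simpl in Hx |- *; destruct Hx as [|[|]]; auto |].
    unfold s. rewrite !upd_neq by lia. reflexivity.
  - intros x Hx. simpl in Hx. unfold s. rewrite !upd_neq; [reflexivity | intros ->; tauto ..].
  - simpl. rewrite !Hs, Hs3, Hs4 by assumption. nn_within_tac.
Qed.

Lemma thm_env_neg_id E a k :
  bound k E -> bound k a -> nnA (¬ a) -> thm (E ~> a ~> a) -> thm (E ~> ¬ a ~> ¬ a).
Proof.
  intros HbE Hba Hnn Ha. assert (Hnna := thm_nn_within _ Ha).
  apply (detach_nn_theorem _ nn_within_nnfree _ _ 3 (k + 3) (E ~> a ~> a) (inst [E; a; a] (k + 3)) _
           nn_contra_under); auto; try lia; try bound_tac.
  - intros y Hy Hn. simpl in Hy, Hn. tauto.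
  - apply variant_refl.
  - nn_within_tac.
Qed.

Lemma thm_env_id k : (forall j, j <= k -> thm (env k ~> #j ~> #j)) ->
  forall c, bound (S k) c -> nnA c -> thm (env k ~> c ~> c).
Proof.
  intros Hvar c. induction c as [j|a IHa b IHb|a IHa]; intros Hb Hnn.
  - apply Hvar. specialize (Hb j eq_refl). lia.
  - apply bound_imp in Hb as [Hba Hbb]. apply nn_within_imp in Hnn as [Hnna Hnnb].
    apply (thm_env_imp_id _ _ _ (S k)); auto using bound_env.
    intros x Hx. apply occurs_env. lia.
  - apply (thm_env_neg_id _ _ (S k)); auto using bound_env.
    apply IHa; [exact Hb | now apply nn_within_neg].
Qed.

Lemma thm_env_succ k : thm (env k) -> thm (env (S k)).
Proof.
  intros HE.
  apply (detach_nn_theorem _ nn_within_nnfree _ _ 2 (k + 3) (env k) (inst [env k] (k + 3)) _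
           nn_drop_id); auto; try lia; try bound_tac.
  - intros y Hy Hn. simpl in Hy, Hn. apply inst_fresh. simpl. lia.
  - apply (variant_replace_var (k + 3 + 1) (S k)); simpl.
    + intros [[Hx|Hx]|Hx]; [lia | lia | apply occurs_env in Hx; lia].
    + rewrite upd_eq, subst_upd_fresh; [reflexivity|]. rewrite occurs_env. lia.
  - nn_within_tac.
Qed.

Lemma thm_env_succ_top k : thm (env k ~> env k) -> thm (env (S k) ~> #(S k) ~> #(S k)).
Proof.
  intros HE.
  apply (detach_nn_theorem _ nn_within_nnfree _ _ 3 (k + 3) (env k ~> env k)
           (inst [env k; env k] (k + 3)) _ nn_env_id); auto; try lia; try bound_tac.
  - intros y Hy Hn. simpl in Hy, Hn. apply inst_fresh. simpl. lia.
  - apply (variant_replace_var (k + 3 + 2) (S k)); simpl.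
    + rewrite occurs_env. lia.
    + rewrite !upd_eq, subst_upd_fresh; [reflexivity|]. rewrite occurs_env. lia.
  - nn_within_tac.
Qed.

Lemma thm_env_succ_var k j : j <= k ->
  thm (env k ~> #j ~> #j) -> thm (env (S k) ~> #j ~> #j).
Proof.
  intros Hj HE.
  apply (detach_nn_theorem _ nn_within_nnfree _ _ 3 (k + 3) (env k ~> #j ~> #j)
           (inst [env k; #j ~> #j] (k + 3)) _ nn_env_mp); auto; try lia; try bound_tac.
  - intros y Hy Hn. simpl in Hy, Hn. apply inst_fresh. simpl. lia.
  - apply (variant_replace_var (k + 3 + 2) (S k)); simpl.
    + rewrite occurs_env. lia.
    + rewrite upd_eq, !upd_neq, subst_upd_fresh by (try rewrite occurs_env; lia). reflexivity.
  - nn_within_tac.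
Qed.

Lemma thm_env k : thm (env k) /\ forall j, j <= k -> thm (env k ~> #j ~> #j).
Proof.
  induction k as [|k [HE Hvar]].
  - split; [apply thm_nn_theorem, nn_id|].
    intros j Hj. replace j with 0 by lia. apply thm_nn_theorem, nn_id_id.
  - assert (Hself : thm (env k ~> env k)).
    { apply (thm_mp (env k) _ (S k)); [|exact HE | bound_tac].
      apply thm_env_id; auto using bound_env. apply nn_within_nnfree, nnfree_env. }
    split; [now apply thm_env_succ|].
    intros j Hj. destruct (Nat.eq_dec j (S k)) as [->|Hne].
    + now apply thm_env_succ_top.
    + apply thm_env_succ_var; [lia | apply Hvar; lia].
Qed.

Lemma thm_instance_under E X G g tau k :
  thm (E ~> X ~> X) -> bound k (E ~> X ~> X) ->
  nn_theorem G -> bound g G -> X = subst tau G -> thm (E ~> X).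
Proof.
  intros H Hb HG HbG HX.
  apply (thm_S _ _ _ k) in H; [|exact Hb].
  assert (HK := thm_nn_theorem _ (nn_theorem_K G g HG HbG)).
  set (k' := k + S g). set (p := block_swap k' (S g)).
  apply (provable_within_cd _ _ _ _ H HK);
    [|apply thm_nn_within in H; now apply nn_within_imp in H].
  apply (cd_variant_minor _ _ (rename p (#g ~> G)));
    [apply variant_rename, renaming_block_swap; lia|].
  apply (cd_antecedent_instance _ _ _ (fun x => if x =? g + k' then E else tau (x - k'))).
  - intros x Hx HxQ. apply (block_swap_apart k' (S g)) in HxQ; [|bound_tac].
    assert (Hb' : bound k ((E ~> X) ~> E ~> X)) by bound_tac.
    apply Hb' in Hx. lia.
  - unfold rename. rewrite subst_subst. simpl. f_equal.
    + unfold p, block_swap. destruct (Nat.ltb_spec g (S g)); [|lia]. now rewrite Nat.eqb_refl.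
    + rewrite HX. apply subst_ext_on. intros y Hy. apply HbG in Hy. unfold p, block_swap.
      destruct (Nat.ltb_spec y (S g)); [|lia].
      destruct (Nat.eqb_spec (y + k') (g + k')); [lia|]. f_equal. lia.
Qed.

End Restricted.

(** * A Kripke semantics for the restricted Hilbert calculus *)

Lemma subform_trans f g h : subform f g -> subform g h -> subform f h.
Proof. intros H1 H2. induction H2; auto using subform. Qed.

Lemma subform_occurs x f g : subform f g -> occurs x f -> occurs x g.
Proof. induction 1; simpl; auto. Qed.

Section Semantics.
Variable A : form.
Variable m : nat.

Definition admissible (f : form) : Prop := bound m f /\ nn_within A f.

Lemma admissible_imp a b : admissible (a ~> b) <-> admissible a /\ admissible b.
Proof. unfold admissible. rewrite bound_imp, nn_within_imp. tauto. Qed.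

Lemma admissible_subform f : bound m A -> subform f A -> admissible f.
Proof.
  intros Hb Hf. split.
  - intros x Hx. apply Hb. eapply subform_occurs; eauto.
  - intros t Ht. eapply subform_trans; eauto.
Qed.

Inductive hderiv (Γ : form -> Prop) : form -> Prop :=
| hd_hyp p : Γ p -> admissible p -> hderiv Γ p
| hd_ax H g tau : nn_theorem H -> bound g H -> admissible (subst tau H) ->
    hderiv Γ (subst tau H)
| hd_mp a b : hderiv Γ (a ~> b) -> hderiv Γ a -> hderiv Γ b.

Lemma hderiv_admissible Γ p : hderiv Γ p -> admissible p.
Proof. induction 1; auto. now apply admissible_imp in IHhderiv1. Qed.

Lemma hderiv_hderiv Γ p : hderiv (hderiv Γ) p -> hderiv Γ p.
Proof. induction 1; [assumption | eapply hd_ax; eauto | eapply hd_mp; eauto]. Qed.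

Lemma hderiv_K Γ a b : admissible a -> admissible b -> hderiv Γ (a ~> b ~> a).
Proof.
  intros. apply (hd_ax _ (#0 ~> #1 ~> #0) 2 (inst [a; b; a] 0) ax_K); [bound_tac|].
  repeat (apply admissible_imp; split); assumption.
Qed.

Lemma hderiv_S Γ a b c : admissible a -> admissible b -> admissible c ->
  hderiv Γ ((a ~> b ~> c) ~> (a ~> b) ~> a ~> c).
Proof.
  intros. apply (hd_ax _ _ 3 (inst [a; b; c] 0) ax_S); [bound_tac|].
  repeat (apply admissible_imp; split); assumption.
Qed.

Lemma hderiv_id Γ a : admissible a -> hderiv Γ (a ~> a).
Proof.
  intros Ha. assert (Haa : admissible (a ~> a)) by (apply admissible_imp; auto).
  eapply hd_mp; [eapply hd_mp; [apply (hderiv_S _ a (a ~> a) a) | apply hderiv_K] | apply hderiv_K];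
    auto; apply admissible_imp; auto.
Qed.

Lemma hderiv_deduction Γ a b :
  admissible a -> hderiv (fun q => Γ q \/ q = a) b -> hderiv Γ (a ~> b).
Proof.
  intros Ha D. induction D as [p [Hp| ->] Hadm|H g tau HH Hg Hadm|p q D1 IH1 D2 IH2].
  - eapply hd_mp; [apply hderiv_K | apply hd_hyp]; auto.
  - now apply hderiv_id.
  - eapply hd_mp; [apply hderiv_K | eapply hd_ax]; eauto.
  - apply hderiv_admissible, admissible_imp in D1 as [Hp Hq].
    eapply hd_mp; [eapply hd_mp; [apply hderiv_S | exact IH1] | exact IH2]; auto.
Qed.

Definition theory (Γ : form -> Prop) : Prop :=
  (forall p, Γ p -> admissible p) /\ (forall p, hderiv Γ p -> Γ p).

Definition explosive (Γ : form -> Prop) : Prop := forall p, admissible p -> Γ p.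

Definition included (Γ Δ : form -> Prop) : Prop := forall p, Γ p -> Δ p.

Definition extend (Γ : form -> Prop) (a : form) : form -> Prop :=
  hderiv (fun q => Γ q \/ q = a).

Lemma theory_extend Γ a : admissible a -> theory (extend Γ a).
Proof. split; [apply hderiv_admissible | apply hderiv_hderiv]. Qed.

Lemma included_extend Γ a : theory Γ -> included Γ (extend Γ a).
Proof. intros HΓ p Hp. apply hd_hyp; [now left | now apply HΓ]. Qed.

Lemma extend_mem Γ a : admissible a -> extend Γ a a.
Proof. intros Ha. apply hd_hyp; [now right | exact Ha]. Qed.

Fixpoint forces (Γ : form -> Prop) (f : form) : Prop :=
  match f with
  | Var x => Γ (Var x) \/ explosive Γ
  | Imp a b => forall Δ, theory Δ -> included Γ Δ -> forces Δ a -> forces Δ b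
  | Neg a => forall Δ, theory Δ -> included Γ Δ -> forces Δ a -> explosive Δ
  end.

Lemma forces_mono f Γ Δ : forces Γ f -> theory Δ -> included Γ Δ -> forces Δ f.
Proof.
  destruct f; simpl; intros H HΔ HΓΔ.
  - destruct H as [H|H]; [left | right; intros p Hp]; auto.
  - intros Δ' HΔ' HΔΔ'. apply H; auto. intros p Hp. auto.
  - intros Δ' HΔ' HΔΔ'. apply H; auto. intros p Hp. auto.
Qed.

Lemma forces_explosive f Γ : explosive Γ -> forces Γ f.
Proof.
  revert Γ. induction f; simpl; intros Γ HE.
  - now right.
  - intros Δ HΔ HΓΔ _. apply IHf2. intros p Hp. auto.
  - intros Δ HΔ HΓΔ _ p Hp. auto.
Qed.

Lemma forces_mp Γ a b : theory Γ -> forces Γ (a ~> b) -> forces Γ a -> forces Γ b.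
Proof. intros HΓ Hab Ha. apply Hab; auto. now intros p. Qed.

Definition valid (f : form) : Prop := forall s Γ, theory Γ -> forces Γ (subst s f).

Lemma valid_axiom f : is_axiom f -> valid f.
Proof.
  intros [H [HIn [p [_ ->]]]] s Γ HΓ. unfold rename. rewrite subst_subst.
  simpl in HIn. destruct HIn as [<-|[<-|[<-|[<-|[]]]]]; simpl.
  - intros Δ1 HΔ1 H1 F1 Δ2 HΔ2 H2 _. now apply (forces_mono _ Δ1).
  - intros Δ1 HΔ1 H1 F1 Δ2 HΔ2 H2 F2 Δ3 HΔ3 H3 F3.
    exact (forces_mp Δ3 _ _ HΔ3 (F1 Δ3 HΔ3 (fun q Hq => H3 q (H2 q Hq)) F3)
             (F2 Δ3 HΔ3 H3 F3)).
  - intros Δ1 HΔ1 H1 F1 Δ2 HΔ2 H2 F2. apply (F1 Δ2 HΔ2 H2 F2 Δ2); auto. now intros q.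
  - intros Δ1 HΔ1 H1 F1 Δ2 HΔ2 H2 F2. apply forces_explosive.
    apply (F2 Δ2 HΔ2); [now intros q | now apply (forces_mono _ Δ1)].
Qed.

Lemma valid_variant f g : valid f -> variant f g -> valid g.
Proof. intros H [p [_ ->]] s Γ HΓ. unfold rename. rewrite subst_subst. now apply H. Qed.

Lemma valid_cd P Q R : valid P -> valid Q -> cd P Q R -> valid R.
Proof.
  intros HP HQ (P'&Q'&a&b&s&V1&V2&_&->&[Hu _]&V3).
  eapply valid_variant; [|exact V3]. intros s' Γ HΓ.
  set (t := fun x => subst s' (s x)).
  assert (Hab := valid_variant _ _ HP V1 t Γ HΓ).
  assert (Hq := valid_variant _ _ HQ V2 t Γ HΓ).
  rewrite subst_subst. simpl in Hab. apply (forces_mp Γ (subst t a)); [exact HΓ | exact Hab |].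
  unfold t. rewrite <- subst_subst, Hu, subst_subst. exact Hq.
Qed.

Lemma valid_derivation l : derivation l -> forall f, In f l -> valid f.
Proof.
  induction 1 as [|l F D IH HF|l P Q F D IH HP HQ Hc]; intros f Hf; [destruct Hf|..];
    apply in_app_or in Hf as [Hf|[<-|[]]]; auto.
  - now apply valid_axiom.
  - apply (valid_cd P Q); auto.
Qed.

Lemma forces_iff_mem f : bound m A -> subform f A ->
  forall Γ, theory Γ -> forces Γ f <-> Γ f.
Proof.
  intros Hb. induction f as [x|a IHa b IHb|a IHa]; intros Hf Γ HΓ; simpl.
  - split; [intros [H|H]; auto; apply H; now apply admissible_subform | auto].
  - assert (Ha : subform a A) by (eapply subform_trans; [apply sub_impl, sub_refl | exact Hf]).
    assert (Hb' : subform b A) by (eapply subform_trans; [apply sub_impr, sub_refl | exact Hf]).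
    assert (Hadm := admissible_subform _ Hb Ha).
    split.
    + intros H. apply HΓ, hderiv_deduction; [exact Hadm|].
      apply (IHb Hb' _ (theory_extend Γ a Hadm)).
      apply H; auto using theory_extend, included_extend.
      apply (IHa Ha _ (theory_extend Γ a Hadm)), extend_mem, Hadm.
    + intros H Δ HΔ HΓΔ Fa. apply (IHb Hb' Δ HΔ). apply (IHa Ha Δ HΔ) in Fa.
      apply HΔ. apply (hd_mp _ a); apply hd_hyp; auto; apply HΔ; auto.
  - assert (Ha : subform a A) by (eapply subform_trans; [apply sub_neg, sub_refl | exact Hf]).
    assert (Hadm := admissible_subform _ Hb Ha).
    assert (Hadmn := admissible_subform _ Hb Hf).
    split.
    + intros H. apply HΓ.
      assert (Hex := H _ (theory_extend Γ a Hadm) (included_extend Γ a HΓ)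
                       (proj2 (IHa Ha _ (theory_extend Γ a Hadm)) (extend_mem Γ a Hadm))).
      eapply hd_mp; [|apply hderiv_deduction; [exact Hadm | exact (Hex _ Hadmn)]].
      apply (hd_ax _ _ 1 (inst [a] 0) ax_H3); [bound_tac|].
      repeat (apply admissible_imp; split); assumption.
    + intros H Δ HΔ HΓΔ Fa p Hp. apply (IHa Ha Δ HΔ) in Fa. apply HΔ.
      apply (hd_mp _ (¬ a)); [apply (hd_mp _ a)|]; [| apply hd_hyp; auto ..].
      apply (hd_ax _ _ 2 (inst [a; p] 0) ax_H4); [bound_tac|].
      repeat (apply admissible_imp; split); assumption.
Qed.

End Semantics.

Lemma hderiv_of_provable A m : provable A -> bound m A -> hderiv A m (fun _ => False) A.
Proof.
  intros [l D] Hb.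
  set (Γ := hderiv A m (fun _ => False)).
  assert (HΓ : theory A m Γ) by (split; [apply hderiv_admissible | apply hderiv_hderiv]).
  assert (HA : valid A m A) by (apply (valid_derivation A m _ D), in_or_app; simpl; tauto).
  specialize (HA Var Γ HΓ). rewrite subst_var in HA.
  exact (proj1 (forces_iff_mem A m A Hb (sub_refl A) Γ HΓ) HA).
Qed.

Lemma thm_env_of_hderiv A k p :
  hderiv A (S k) (fun _ => False) p -> provable_within (nn_within A) (env k ~> p).
Proof.
  destruct (thm_env A k) as [_ Hvar].
  induction 1 as [p []|H g tau HH Hg [Hbp Hnnp]|a b D1 IH1 D2 IH2].
  - apply (thm_instance_under A (env k) _ H g tau (S k)); auto; [|bound_tac].
    now apply thm_env_id.
  - apply (thm_mp_under A (env k) a b (S k) IH1 IH2).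
    apply hderiv_admissible in D1 as [Hb _]. bound_tac.
Qed.

Theorem theorem9 (A : form) :
  provable A ->
  exists l : list form,
    derivation (l ++ [A]) /\
    (forall F, In F (l ++ [A]) ->
       forall t, subform (Neg (Neg t)) F -> subform (Neg (Neg t)) A).
Proof.
  intros HA. set (k := maxvar A).
  assert (Hb : bound (S k) A) by apply bound_maxvar.
  destruct (thm_env A k) as [HE _].
  apply (thm_mp A (env k) A (S k)); [| exact HE | bound_tac].
  apply thm_env_of_hderiv, hderiv_of_provable; assumption.
Qed.
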